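(* Let $A\in\mathbf{R}^{n\times n}$, $C_i\in\mathbf{R}^{m_i\times n}$ ($i=1,\ldots,N$), $H\in\mathbf{R}^{p\times n}$, and let $\mathcal{L}$ be the Laplacian of a directed graph on $N$ nodes. Set $\bar A=I_N\otimes A$, $\bar C=\mathrm{diag}[C_1,\ldots,C_N]$, $\bar H=\mathcal{L}\otimes H$. Then the pair $\left(\begin{bmatrix}\bar C\\ \bar H\end{bmatrix},\bar A\right)$ is detectable if and only if $$\bar{\mathcal{O}}\cap \prod_{i=1}^N\mathcal{C}_i=\{0\},$$ where $\mathcal{C}_i$ is the undetectable subspace of $(C_i,A)$ and $\bar{\mathcal{O}}=\bigcap_{l=1}^{nN}\operatorname{Ker}(\bar H\bar A^{l-1})$ is the unobservable subspace of $(\bar H,\bar A)$.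
   Context: Directed graph $\mathbf{G}=(\mathbf{V},\mathbf{E})$, $\mathbf{V}=\{1,\ldots,N\}$, without self-loops; $(j,i)\in\mathbf{E}$ denotes an edge from $j$ to $i$. Adjacency matrix $\mathbf{A}=[\mathbf{a}_{ij}]$ with $\mathbf{a}_{ij}=1$ if $(j,i)\in\mathbf{E}$ and $0$ otherwise; $p_i$ is the in-degree of node $i$; the Laplacian is $\mathcal{L}=\mathrm{diag}[p_1,\ldots,p_N]-\mathbf{A}$. For a matrix $F\in\mathbf{R}^{n\times n}$ with minimal polynomial $\alpha_F(s)$, factor $\alpha_F=\alpha_F^-\alpha_F^+$ where the zeros of $\alpha_F^-$ lie in the open left half-plane and those of $\alpha_F^+$ in the closed right half-plane. The undetectable subspace of a pair $(G,F)$, $G\in\mathbf{R}^{m\times n}$, is $\bigcap_{l=1}^n\operatorname{Ker}(GF^{l-1})\cap\operatorname{Ker}\alpha_F^+(F)$; the pair is detectable iff this subspace is $\{0\}$. $\prod_{i=1}^N\mathcal{C}_i\subseteq\mathbf{R}^{nN}$ denotes the set of stacked vectors $[x_1';\ldots;x_N']'$ with $x_i\in\mathcal{C}_i$. *)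

From HB Require Import structures.
From mathcomp Require Import all_boot all_order all_algebra.
From mathcomp Require Import complex.
Set Implicit Arguments. Unset Strict Implicit. Unset Printing Implicit Defensive.
Import Order.TTheory GRing.Theory Num.Theory.
Local Open Scope ring_scope.

(* R : rcfType (e.g. the reals); its algebraic closure is
   the complex numbers R[i] = complex R, used to locate the zeros of
   polynomials in the open left / closed right half-plane. *)

Section Defs.
Variable R : rcfType.

Definition poly_mx d (F : 'M[R]_d) (q : {poly R}) : 'M[R]_d :=
  \sum_(k < size q) q`_k *: F ^+ k.

Definition is_minpoly d (F : 'M[R]_d) (a : {poly R}) : Prop :=
  a \is monic /\ poly_mx F a = 0 /\
  (forall b : {poly R}, b != 0 -> poly_mx F b = 0 -> (size a <= size b)%N).

Definition cpoly (q : {poly R}) : {poly R[i]} :=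
  map_poly (fun r : R => (r%:C)%C) q.

(* q is alpha_F^+ : alpha_F = alpha_F^- * alpha_F^+ with alpha_F^- having
   all its (complex) zeros in the open left half plane and alpha_F^+ all
   its zeros in the closed right half plane (both factors taken monic,
   which makes the factorization unique). *)
Definition is_alpha_plus d (F : 'M[R]_d) (q : {poly R}) : Prop :=
  exists p : {poly R},
    [/\ is_minpoly F (p * q), p \is monic, q \is monic,
        (forall z : R[i], root (cpoly p) z -> Re z < 0) &
        (forall z : R[i], root (cpoly q) z -> 0 <= Re z)].

Definition undetectable m d (G : 'M[R]_(m, d)) (F : 'M[R]_d) (x : 'cV[R]_d)
  : Prop :=
  (forall l : nat, (l < d)%N -> G *m F ^+ l *m x = 0) /\
  exists q, is_alpha_plus F q /\ poly_mx F q *m x = 0.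

Definition detectable m d (G : 'M[R]_(m, d)) (F : 'M[R]_d) : Prop :=
  forall x, undetectable G F x -> x = 0.

End Defs.

(* Laplacian of the directed graph on 'I_N with edge relation E,
   E j i meaning (j,i) in the edge set (edge from j to i).
   a_ij = 1 iff E j i ;  p_i = in-degree of i ;  L = diag(p) - A. *)
Definition adj_entry (R : pzRingType) N (E : rel 'I_N) (i j : 'I_N) : R :=
  (E j i)%:R.
Definition indeg N (E : rel 'I_N) (i : 'I_N) : nat := #|[pred j | E j i]|.
Definition laplacian (R : pzRingType) N (E : rel 'I_N) : 'M[R]_N :=
  \matrix_(i, j) ((i == j)%:R * (indeg E i)%:R - adj_entry R E i j).

From HB Require Import structures.
From mathcomp Require Import all_boot all_order all_algebra.
From mathcomp Require Import complex.
Import Order.TTheory GRing.Theory Num.Theory.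
Local Open Scope ring_scope.
Set Implicit Arguments. Unset Strict Implicit.

(* Abar = diag(A, ..., A) is annihilated by exactly the polynomials annihilating
   A, so Abar and A have the same minimal polynomial and the same factor
   alpha^+; as Cbar is block diagonal as well, the undetectable subspace of
   ([Cbar; Hbar], Abar) is the unobservable subspace of (Hbar, Abar)
   intersected with the product of the undetectable subspaces of the (C_i, A).
   Cayley-Hamilton makes the observability horizons n and nN interchangeable. *)

Section PolyMx.
Variable R : rcfType.

Lemma poly_mxE d (F : 'M[R]_d.+1) q : poly_mx F q = horner_mx F q.
Proof.
rewrite /poly_mx /horner_mx /horner_morph /map_poly horner_poly.
by apply: eq_bigr => k _; rewrite -mul_scalar_mx mulmxE.
Qed.

Lemma poly_mxM d (F : 'M[R]_d) a b :
  poly_mx F (a * b) = poly_mx F a * poly_mx F b.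
Proof.
case: d F => [|d] F; first by apply/matrixP => [[]].
by rewrite !poly_mxE rmorphM.
Qed.

Lemma poly_mxD d (F : 'M[R]_d) a b :
  poly_mx F (a + b) = poly_mx F a + poly_mx F b.
Proof.
case: d F => [|d] F; first by apply/matrixP => [[]].
by rewrite !poly_mxE rmorphD.
Qed.

Lemma poly_mx_modp d (F : 'M[R]_d) a b :
  poly_mx F a = 0 -> poly_mx F (b %% a) = poly_mx F b.
Proof.
move=> Fa0; rewrite [in RHS](divp_eq b a) poly_mxD poly_mxM Fa0.
by rewrite mulr0 add0r.
Qed.

Lemma exp_mx_lowdeg d (F : 'M[R]_d) l :
  exists2 r : {poly R}, (size r <= d)%N & F ^+ l = poly_mx F r.
Proof.
case: d F => [|d] F; first by exists 0; [rewrite size_poly0 | apply/matrixP => [[]]].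
exists ('X^l %% char_poly F).
  by rewrite -ltnS -(size_char_poly F) ltn_modp (monic_neq0 (char_poly_monic F)).
rewrite poly_mx_modp !poly_mxE ?Cayley_Hamilton //.
by rewrite rmorphXn /=; congr (_ ^+ _); rewrite horner_mx_X.
Qed.

Lemma minpoly_dvdp d (F : 'M[R]_d) a b :
  is_minpoly F a -> poly_mx F b = 0 -> a %| b.
Proof.
case=> /monic_neq0 a_neq0 [Fa0 a_min] Fb0.
apply/modp_eq0P/eqP; apply: contraT => rem_neq0.
have := a_min _ rem_neq0; rewrite poly_mx_modp // => /(_ Fb0).
by rewrite leqNgt ltn_modp a_neq0.
Qed.

(* A nonconstant gcd would have a root in R[i], lying in both half-planes. *)
Lemma coprimep_half_planes (p q : {poly R}) : q \is monic ->
  (forall z : R[i], root (cpoly p) z -> Re z < 0) ->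
  (forall z : R[i], root (cpoly q) z -> 0 <= Re z) -> coprimep q p.
Proof.
move=> q_monic p_left q_right; rewrite coprimep_def; apply: contraT => gcd_size.
have [z gcd_z] : exists z, root (cpoly (gcdp q p)) z.
  by apply/closed_rootP; rewrite /cpoly size_map_poly.
have q_z : root (cpoly q) z.
  by apply: root_dvdp gcd_z; rewrite /cpoly dvdp_map dvdp_gcdl.
have p_z : root (cpoly p) z.
  by apply: root_dvdp gcd_z; rewrite /cpoly dvdp_map dvdp_gcdr.
by have := lt_le_trans (p_left z p_z) (q_right z q_z); rewrite ltxx.
Qed.

Lemma alpha_plus_dvdp d (F : 'M[R]_d) q q' :
  is_alpha_plus F q -> is_alpha_plus F q' -> q' %| q.
Proof.
move=> [p [[_ [Fpq0 _]] _ q_monic p_left _]] [p' [min' _ q'_monic _ q'_right]].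
have : q' %| p * q := dvdp_trans (dvdp_mulIr p' q') (minpoly_dvdp min' Fpq0).
by rewrite Gauss_dvdpr //; apply: coprimep_half_planes.
Qed.

Lemma alpha_plus_unique d (F : 'M[R]_d) q q' :
  is_alpha_plus F q -> is_alpha_plus F q' -> q = q'.
Proof.
move=> Fq Fq'; have [p [_ _ q_monic _ _]] := Fq; have [p' [_ _ q'_monic _ _]] := Fq'.
apply/eqP; rewrite -eqp_monic // /eqp.
by rewrite (alpha_plus_dvdp Fq Fq') (alpha_plus_dvdp Fq' Fq).
Qed.

Lemma alpha_plus_same_annihilators d1 d2 (F1 : 'M[R]_d1) (F2 : 'M[R]_d2) q :
  (forall b, poly_mx F1 b = 0 <-> poly_mx F2 b = 0) ->
  is_alpha_plus F1 q -> is_alpha_plus F2 q.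
Proof.
move=> ann [p [[pq_monic [F1pq0 pq_min]] p_monic q_monic p_left q_right]].
exists p; split => //; split => //; split; first exact/ann.
by move=> b b_neq0 /ann; apply: pq_min.
Qed.

End PolyMx.

Section Unobservable.
Variable R : rcfType.

Definition unobservable m d (G : 'M[R]_(m, d)) (F : 'M[R]_d) (x : 'cV[R]_d) :=
  forall l, G *m F ^+ l *m x = 0.

Lemma unobservableP m d (G : 'M[R]_(m, d)) F x k : (d <= k)%N ->
  (forall l, (l < k)%N -> G *m F ^+ l *m x = 0) <-> unobservable G F x.
Proof.
move=> le_dk; split=> [Gx0 l | Gx0 l _]; last exact: Gx0.
have [r size_r ->] := exp_mx_lowdeg F l.
rewrite /poly_mx mulmx_sumr mulmx_suml big1 // => j _.
rewrite -scalemxAr -scalemxAl Gx0 ?scaler0 //.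
exact: leq_trans (ltn_ord j) (leq_trans size_r le_dk).
Qed.

Lemma unobservable_col_mx m1 m2 d (G1 : 'M[R]_(m1, d)) (G2 : 'M[R]_(m2, d)) F x :
  unobservable (col_mx G1 G2) F x <-> unobservable G1 F x /\ unobservable G2 F x.
Proof.
rewrite /unobservable; split=> [Gx0 | [G1x0 G2x0] l].
  by split=> l; have /eqP := Gx0 l;
    rewrite -mulmxA mul_col_mx col_mx_eq0 !mulmxA => /andP[/eqP ? /eqP ?].
by rewrite -mulmxA mul_col_mx !mulmxA G1x0 G2x0 col_mx0.
Qed.

Lemma undetectableE m d (G : 'M[R]_(m, d)) F x q : is_alpha_plus F q ->
  undetectable G F x <-> unobservable G F x /\ poly_mx F q *m x = 0.
Proof.
move=> Fq; rewrite /undetectable (unobservableP _ _ _ (leqnn d)).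
split=> [[Gx0 [q' [Fq' q'x0]]] | [Gx0 qx0]]; last by split=> //; exists q.
by rewrite (alpha_plus_unique Fq Fq').
Qed.

End Unobservable.

Section BlockDiagonal.
Variables (R : rcfType) (N : nat) (p_ : 'I_N -> nat).
Variable D_ : forall i, 'M[R]_(p_ i).
Notation D := (\mxdiag_(i < N) D_ i).

Lemma submxcolZ k a (B : 'M[R]_(\sum_i p_ i, k)) i :
  submxcol (a *: B) i = a *: submxcol B i.
Proof. by apply/matrixP => r c; rewrite !mxE. Qed.

Lemma mxcol_eq0P k (B : 'M[R]_(\sum_i p_ i, k)) :
  B = 0 <-> forall i, submxcol B i = 0.
Proof.
split=> [-> i | B0]; first exact: submxcol0.
by rewrite -(submxcolK B) (eq_mxcol B0) mxcol0.
Qed.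

Lemma submxcol_mxdiag_exp l k (Y : 'M[R]_(\sum_i p_ i, k)) i :
  submxcol (D ^+ l *m Y) i = D_ i ^+ l *m submxcol Y i.
Proof.
elim: l => [|l IH]; first by rewrite !expr0 !mul1mx.
rewrite !exprS -!mulmxE -!mulmxA -IH.
by rewrite -[D ^+ l *m Y in LHS]submxcolK mul_mxdiag_mxcol mxcolK.
Qed.

Lemma submxcol_poly_mxdiag q k (Y : 'M[R]_(\sum_i p_ i, k)) i :
  submxcol (poly_mx D q *m Y) i = poly_mx (D_ i) q *m submxcol Y i.
Proof.
rewrite /poly_mx !mulmx_suml submxcol_sum; apply: eq_bigr => j _.
by rewrite -!scalemxAl submxcolZ submxcol_mxdiag_exp.
Qed.

Lemma poly_mxdiag_eq0 b :
  poly_mx D b = 0 <-> forall i, poly_mx (D_ i) b = 0.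
Proof.
split=> [Db0 i | Db0].
  have := submxcol_poly_mxdiag b (\mxcol_j (pid_mx (p_ i) : 'M_(p_ j, p_ i))) i.
  by rewrite Db0 mul0mx submxcol0 mxcolK pid_mx_1 mulmx1.
by rewrite -[LHS]mulmx1; apply/mxcol_eq0P => i; rewrite submxcol_poly_mxdiag Db0 mul0mx.
Qed.

End BlockDiagonal.

Section Network.
Variables (R : rcfType) (N n : nat) (m : 'I_N -> nat).
Variables (A : 'M[R]_n) (C : forall i : 'I_N, 'M[R]_(m i, n)).
Notation Abar := (\mxdiag_(i < N) A).
Notation Cbar := (\mxblock_(i < N, j < N) (if i == j then C i else 0)).

Lemma submxcol_Cbar k (Y : 'M[R]_(\sum_(i < N) n, k)) i :
  submxcol (Cbar *m Y) i = C i *m submxcol Y i.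
Proof.
rewrite -[Y in LHS]submxcolK mul_mxblock_mxrow mxcolK (bigD1 i) //= eqxx.
by rewrite big1 ?addr0 // => j /negbTE ji; rewrite eq_sym ji mul0mx.
Qed.

Lemma unobservable_Cbar x :
  unobservable Cbar Abar x <-> forall i, unobservable (C i) A (submxcol x i).
Proof.
split=> [Cx0 i l | Cx0 l].
  by have /mxcol_eq0P/(_ i) := Cx0 l; rewrite -mulmxA submxcol_Cbar
    submxcol_mxdiag_exp mulmxA.
apply/mxcol_eq0P => i.
by rewrite -mulmxA submxcol_Cbar submxcol_mxdiag_exp mulmxA Cx0.
Qed.

Lemma undetectable_network k (G : 'M[R]_(k, \sum_(i < N) n)) x : (0 < N)%N ->
  undetectable (col_mx Cbar G) Abar x <->
  unobservable G Abar x /\ forall i, undetectable (C i) A (submxcol x i).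
Proof.
move=> N_gt0.
have alphaE q : is_alpha_plus Abar q <-> is_alpha_plus A q.
  have same_ann b : poly_mx Abar b = 0 <-> poly_mx A b = 0.
    by rewrite poly_mxdiag_eq0; split=> [/(_ (Ordinal N_gt0)) | Ab0 i].
  by split; apply: alpha_plus_same_annihilators => // b; rewrite same_ann.
have poly_blocks q : poly_mx Abar q *m x = 0 <->
    forall i, poly_mx A q *m submxcol x i = 0.
  by rewrite mxcol_eq0P; split=> qx0 i; have := qx0 i;
    rewrite submxcol_poly_mxdiag.
have blocksE q : is_alpha_plus A q ->
    undetectable (col_mx Cbar G) Abar x <->
    unobservable G Abar x /\ forall i, undetectable (C i) A (submxcol x i).
  move=> Aq; rewrite (undetectableE _ _ (iffRL (alphaE q) Aq)).
  rewrite unobservable_col_mx unobservable_Cbar poly_blocks.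
  split=> [[[obsC obsG] qx0] | [obsG und]].
    by split=> // i; apply/(undetectableE _ _ Aq).
  by split; [split=> // i |] => [|i]; have /(undetectableE _ _ Aq) [] := und i.
split=> [und | und].
  by have [_ [q [/alphaE Aq _]]] := und; apply/(blocksE q Aq).
by have [_ [q [Aq _]]] := und.2 (Ordinal N_gt0); apply/(blocksE q Aq).
Qed.

End Network.

Unset Implicit Arguments.

Theorem lemma1 (R : rcfType) (n N p : nat) (m : 'I_N -> nat)
  (A : 'M[R]_n) (C : forall i : 'I_N, 'M[R]_(m i, n)) (H : 'M[R]_(p, n))
  (E : rel 'I_N) (noloop : irreflexive E) :
  let Abar : 'M[R]_(\sum_(i < N) n) := \mxdiag_(i < N) A in
  let Cbar : 'M[R]_(\sum_(i < N) m i, \sum_(i < N) n) :=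
    \mxblock_(i < N, j < N) (if i == j then C i else 0)
    in
  let Hbar : 'M[R]_(\sum_(i < N) p, \sum_(i < N) n) :=
    \mxblock_(i < N, j < N) (laplacian R E i j *: H) in
  detectable (col_mx Cbar Hbar) Abar <->
  (forall x : 'cV[R]_(\sum_(i < N) n),
     (forall l : nat, (l < n * N)%N -> Hbar *m Abar ^+ l *m x = 0) ->
     (forall i : 'I_N, undetectable (C i) A (submxcol x i)) ->
     x = 0).
Proof.
move=> Abar Cbar Hbar.
have dim_nN : (\sum_(i < N) n = n * N)%N by rewrite sum_nat_const card_ord mulnC.
have [N0 | N_gt0] := posnP N.
  have x0 (x : 'cV[R]_(\sum_(i < N) n)) : x = 0.
    have nN0 : (n * N = 0)%N by rewrite N0 muln0.
    by apply/matrixP => r; have := ltn_ord r; rewrite {2}dim_nN nN0.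
  by split=> _ x *; apply: x0.
have obsH x : (forall l, (l < n * N)%N -> Hbar *m Abar ^+ l *m x = 0) <->
    unobservable Hbar Abar x.
  by apply: unobservableP; rewrite dim_nN.
split=> det x.
  move=> /obsH obs und; apply: det.
  exact: (iffRL (undetectable_network A C Hbar x N_gt0) (conj obs und)).
move=> /(undetectable_network A C Hbar x N_gt0) [obs und].
by apply: det und; apply/obsH.
Qed.
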